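(* Let $H$ be a real-valued harmonic function in $\mathbb{D}=\{|z|<1\}$ and let $u(z)=H(z)+\frac12(1-|z|^{2})\big(zH_z(z)+\overline{z}H_{\overline{z}}(z)\big)$ for $z\in\mathbb{D}$. Suppose $u\in C^{1}(\overline{\mathbb{D}})$ and $M\in\mathbb{R}$ is such that $u\le M$ on $\mathbb{T}=\{|z|=1\}$. Then $u\le M$ on $\mathbb{D}$.
   Context: $\overline{\mathbb{D}}$ is the closed unit disk; $u\in C^1(\overline{\mathbb{D}})$ means $u$ extends to a $C^1$ function on $\overline{\mathbb{D}}$, and $u$ on $\mathbb{T}$ refers to these boundary values. Note $zH_z+\overline zH_{\overline z}=r\,\partial H/\partial r$ for $z=re^{i\theta}$. *)

(* with Coquelicot for derivatives. Points of the plane are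
   pairs (x, y) of reals, z = x + i y. *)
From Stdlib Require Import Reals.
From Coquelicot Require Import Coquelicot.
Open Scope R_scope.

Definition in_disk (x y : R) : Prop := x ^ 2 + y ^ 2 < 1.
Definition in_cdisk (x y : R) : Prop := x ^ 2 + y ^ 2 <= 1.
Definition on_circle (x y : R) : Prop := x ^ 2 + y ^ 2 = 1.

Definition Dx (f : R -> R -> R) (x y : R) : R := Derive (fun t => f t y) x.
Definition Dy (f : R -> R -> R) (x y : R) : R := Derive (fun t => f x t) y.

Definition cont_within (P : R -> R -> Prop) (f : R -> R -> R) (x y : R) : Prop :=
  forall eps : R, 0 < eps -> exists delta : R, 0 < delta /\
    forall x' y', P x' y' -> (x' - x) ^ 2 + (y' - y) ^ 2 < delta ^ 2 ->
      Rabs (f x' y' - f x y) < eps.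

Definition C1_on (P : R -> R -> Prop) (f : R -> R -> R) : Prop :=
  forall x y, P x y ->
    ex_derive (fun t => f t y) x /\ ex_derive (fun t => f x t) y /\
    continuity_2d_pt f x y /\ continuity_2d_pt (Dx f) x y /\
    continuity_2d_pt (Dy f) x y.

Definition C2_on (P : R -> R -> Prop) (f : R -> R -> R) : Prop :=
  C1_on P f /\ C1_on P (Dx f) /\ C1_on P (Dy f).

Definition harmonic_disk (H : R -> R -> R) : Prop :=
  C2_on in_disk H /\
  forall x y, in_disk x y -> Dx (Dx H) x y + Dy (Dy H) x y = 0.

(* u = H + 1/2 (1 - |z|^2) (z H_z + zbar H_zbar),
   where z H_z + zbar H_zbar = x H_x + y H_y = r dH/dr *)
Definition u_of (H : R -> R -> R) (x y : R) : R :=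
  H x y + / 2 * (1 - (x ^ 2 + y ^ 2)) * (x * Dx H x y + y * Dy H x y).

(* u in C^1(closed disk): u is C^1 in the open disk, and u together with its
   first partial derivatives extend continuously to the closed disk;
   U is the extension of u, whose values on the circle are "u on T". *)
Definition C1_closed_disk_ext (u U : R -> R -> R) : Prop :=
  C1_on in_disk u /\
  (forall x y, in_disk x y -> U x y = u x y) /\
  (forall x y, in_cdisk x y -> cont_within in_cdisk U x y) /\
  exists gx gy : R -> R -> R,
    (forall x y, in_disk x y -> gx x y = Dx u x y /\ gy x y = Dy u x y) /\
    (forall x y, in_cdisk x y ->
       cont_within in_cdisk gx x y /\ cont_within in_cdisk gy x y).

(* Fix w = a + i b in the disk and let phi be the disk automorphism
   z |-> (z + w)/(1 + conj w z).
   Since H o phi is harmonic, its moments on the circle |z| = s against 1, cos and sin solve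
   Euler equations in s; this gives, for |w| < s < 1,
     2 pi u(w) = integral over [0, 2 pi] of H(phi(s e^(iv))) (1 + (a cos v + b sin v)/s) dv,
   a representation of u(w) as an average of H against a nonnegative weight of mass one.
   So u(w) <= sup H on the curve phi(s T), which tends to T as s -> 1, and it remains to show
   H <= M + eps near T. Along a radius, t^2/(1 - t^2) (H(t c, t sn) - M - eps) has derivative
   2t/(1 - t^2)^2 (u(t c, t sn) - M - eps), which is <= 0 near T because u is continuous up to
   T; hence H - M - eps = O(1 - |z|^2) there. *)

From Stdlib Require Import Reals Lra Psatz.
From Coquelicot Require Import Coquelicot.
Open Scope R_scope.

(* Coquelicot states its calculus lemmas with the generic [plus], [mult], [scal] and some
   equalities at types only convertible to [R]; the [_R] variants below are the same
   statements on [R], usable by [apply], [ring] and [field]. *)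
Ltac ring_R := match goal with |- ?x = ?y => change (@eq R x y) end; ring.
Ltac field_R := match goal with |- ?x = ?y => change (@eq R x y) end; field.

Lemma is_derive_val (f : R -> R) (x d1 d2 : R) : is_derive f x d1 -> d1 = d2 -> is_derive f x d2.
Proof. intros Hf <-. exact Hf. Qed.

Lemma is_derive_id_R x : is_derive (fun t : R => t) x 1.
Proof. auto_derive; reflexivity. Qed.

Lemma is_derive_plus_R (f g : R -> R) x df dg : is_derive f x df -> is_derive g x dg ->
  is_derive (fun t => f t + g t) x (df + dg).
Proof. exact (is_derive_plus f g x df dg). Qed.

Lemma is_derive_minus_R (f g : R -> R) x df dg : is_derive f x df -> is_derive g x dg ->
  is_derive (fun t => f t - g t) x (df - dg).
Proof. exact (is_derive_minus f g x df dg). Qed.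

Lemma is_derive_mult_R (f g : R -> R) x df dg : is_derive f x df -> is_derive g x dg ->
  is_derive (fun t => f t * g t) x (df * g x + f x * dg).
Proof.
  intros Hf Hg. eapply is_derive_val; [apply (is_derive_mult f g x df dg Hf Hg)|].
  - intros; apply Rmult_comm.
  - simpl. unfold plus, mult; simpl. ring.
Qed.

Lemma is_RInt_plus_R (f g : R -> R) A B If Ig : is_RInt f A B If -> is_RInt g A B Ig ->
  is_RInt (fun v => f v + g v) A B (If + Ig).
Proof. exact (is_RInt_plus f g A B If Ig). Qed.

Lemma is_RInt_minus_R (f g : R -> R) A B If Ig : is_RInt f A B If -> is_RInt g A B Ig ->
  is_RInt (fun v => f v - g v) A B (If - Ig).
Proof. exact (is_RInt_minus f g A B If Ig). Qed.

Lemma is_RInt_scal_R (f : R -> R) A B k If : is_RInt f A B If ->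
  is_RInt (fun v => k * f v) A B (k * If).
Proof. exact (is_RInt_scal f A B k If). Qed.

Lemma is_derive_continuity_pt (f : R -> R) x d : is_derive f x d -> continuity_pt f x.
Proof.
  intros Hf. apply continuity_pt_filterlim. apply (ex_derive_continuous f x). exists d; exact Hf.
Qed.

Lemma in_disk_nbhd x y : in_disk x y -> exists e, 0 < e /\
  forall x' y', Rabs (x' - x) < e -> Rabs (y' - y) < e -> in_disk x' y'.
Proof.
  unfold in_disk; intros Hxy. set (d := 1 - (x^2 + y^2)).
  exists (d / 5). split; [unfold d; lra|].
  intros x' y' Hx' Hy'. apply Rabs_def2 in Hx'. apply Rabs_def2 in Hy'.
  assert (-1 <= x <= 1 /\ -1 <= y <= 1) as [Hx Hy] by nra.
  assert (0 < d <= 1) by (unfold d; nra).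
  replace ((x'^2) + y'^2) with (x^2 + y^2 + 2*x*(x' - x) + 2*y*(y' - y)
    + (x' - x)*(x' - x) + (y' - y)*(y' - y)) by ring.
  assert ((x' - x)*(x' - x) <= d/5 * (d/5) /\ (y' - y)*(y' - y) <= d/5 * (d/5)) by (split; nra).
  assert (x*(x' - x) <= d/5 /\ y*(y' - y) <= d/5) by (split; nra).
  assert (d/5 * (d/5) <= d/25) by nra.
  unfold d in *. lra.
Qed.

Lemma C1_differentiable (f : R -> R -> R) x y : C1_on in_disk f -> in_disk x y ->
  differentiable_pt_lim f x y (Dx f x y) (Dy f x y).
Proof.
  intros Hf Hxy. apply filterdiff_differentiable_pt_lim.
  destruct (Hf x y Hxy) as (_ & Hey & _ & Hcx & _).
  apply (is_derive_filterdiff f x y (Dx f) (Dy f x y)).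
  - destruct (in_disk_nbhd x y Hxy) as (e & He & Hin).
    exists (mkposreal e He). intros [u v] [Hu Hv].
    apply Derive_correct, (Hf u v), Hin; assumption.
  - apply Derive_correct, Hey.
  - apply continuity_2d_pt_filterlim, Hcx.
Qed.

Lemma is_derive_comp_C1 (f : R -> R -> R) (p q : R -> R) t dp dq :
  C1_on in_disk f -> in_disk (p t) (q t) -> is_derive p t dp -> is_derive q t dq ->
  is_derive (fun t => f (p t) (q t)) t (Dx f (p t) (q t) * dp + Dy f (p t) (q t) * dq).
Proof.
  intros Hf Hin Hp Hq. apply is_derive_Reals, derivable_pt_lim_comp_2d.
  - apply C1_differentiable; assumption.
  - apply is_derive_Reals, Hp.
  - apply is_derive_Reals, Hq.
Qed.

Lemma continuity_2d_pt_comp (F p q : R -> R -> R) s t :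
  continuity_2d_pt F (p s t) (q s t) -> continuity_2d_pt p s t -> continuity_2d_pt q s t ->
  continuity_2d_pt (fun u v => F (p u v) (q u v)) s t.
Proof.
  intros HF Hp Hq eps.
  destruct (HF eps) as [d Hd]. destruct (Hp d) as [d1 H1]. destruct (Hq d) as [d2 H2].
  exists (mkposreal _ (Rmin_pos _ _ (cond_pos d1) (cond_pos d2))).
  intros u v Hu Hv. simpl in Hu, Hv.
  apply Hd.
  - apply H1; eapply Rlt_le_trans; eauto; apply Rmin_l.
  - apply H2; eapply Rlt_le_trans; eauto; apply Rmin_r.
Qed.

Lemma continuity_2d_pt_within_comp (D : R -> R -> Prop) (U p q : R -> R -> R) s t :
  cont_within D U (p s t) (q s t) -> (forall u v, D (p u v) (q u v)) ->
  continuity_2d_pt p s t -> continuity_2d_pt q s t ->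
  continuity_2d_pt (fun u v => U (p u v) (q u v)) s t.
Proof.
  intros HU Hin Hp Hq eps.
  destruct (HU eps (cond_pos eps)) as (d & Hd & Hdd).
  assert (Hd2 : 0 < d/2) by lra.
  destruct (Hp (mkposreal _ Hd2)) as [d1 H1]. destruct (Hq (mkposreal _ Hd2)) as [d2 H2].
  exists (mkposreal _ (Rmin_pos _ _ (cond_pos d1) (cond_pos d2))).
  intros u v Hu Hv. simpl in Hu, Hv.
  assert (A1 : Rabs (p u v - p s t) < d/2) by (apply H1; eapply Rlt_le_trans; eauto; apply Rmin_l).
  assert (A2 : Rabs (q u v - q s t) < d/2) by (apply H2; eapply Rlt_le_trans; eauto; apply Rmin_r).
  apply Rabs_def2 in A1. apply Rabs_def2 in A2.
  apply Hdd; [apply Hin | nra].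
Qed.

Lemma continuity_2d_pt_snd (F : R -> R -> R) u v : continuity_2d_pt F u v -> continuous (F u) v.
Proof.
  intros HF. apply continuity_pt_filterlim.
  intros eps Heps. destruct (HF (mkposreal eps Heps)) as [d Hd].
  exists d. split; [apply cond_pos|]. intros x [_ Hx].
  apply Hd; [rewrite Rminus_eq_0, Rabs_R0; apply cond_pos | exact Hx].
Qed.

Lemma continuity_pt_comp_2d (F : R -> R -> R) (x y : R -> R) t :
  continuity_2d_pt F (x t) (y t) -> continuity_pt x t -> continuity_pt y t ->
  continuity_pt (fun t => F (x t) (y t)) t.
Proof.
  intros HF Hx Hy. apply continuity_pt_filterlim.
  apply (continuity_2d_pt_snd (fun _ v => F (x v) (y v)) 0 t).
  apply (continuity_2d_pt_comp F (fun _ v => x v) (fun _ v => y v)); [exact HF| |];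
    apply (continuity_1d_2d_pt_comp _ (fun _ v => v)); auto using continuity_2d_pt_id2.
Qed.

Lemma is_RInt_continuity_2d_pt (F : R -> R -> R) u A B : (forall v, continuity_2d_pt F u v) ->
  is_RInt (F u) A B (RInt (F u) A B).
Proof.
  intros HF. apply (RInt_correct (V := R_CompleteNormedModule)).
  apply (ex_RInt_continuous (V := R_CompleteNormedModule)).
  intros z _. apply continuity_2d_pt_snd, HF.
Qed.

Lemma is_derive_RInt_param_open (F dF : R -> R -> R) l h A B s :
  (forall u, l < u < h -> forall v, is_derive (fun z => F z v) u (dF u v)) ->
  (forall u, l < u < h -> forall v, continuity_2d_pt dF u v) ->
  (forall u, l < u < h -> forall v, continuity_2d_pt F u v) ->
  l < s < h -> is_derive (fun s => RInt (F s) A B) s (RInt (dF s) A B).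
Proof.
  intros Hd HdF HF Hs.
  set (e := Rmin (h - s) (s - l)).
  assert (He : 0 < e) by (apply Rmin_pos; lra).
  assert (Hin : forall y, Rabs (y - s) < e -> l < y < h).
  { intros y Hy. apply Rabs_def2 in Hy.
    pose proof (Rmin_l (h - s) (s - l)). pose proof (Rmin_r (h - s) (s - l)). unfold e in Hy. lra. }
  replace (RInt (dF s) A B) with (RInt (fun t => Derive (fun u => F u t) s) A B)
    by (apply RInt_ext; intros t _; apply is_derive_unique, Hd, Hs).
  apply is_derive_RInt_param.
  - exists (mkposreal e He). intros y Hy t _. exists (dF y t). apply Hd, Hin, Hy.
  - intros t _. apply continuity_2d_pt_ext_loc with (f := dF); [|apply HdF, Hs].
    exists (mkposreal e He). intros u v Hu _. symmetry. apply is_derive_unique, Hd, Hin, Hu.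
  - exists (mkposreal e He). intros y Hy. apply (ex_RInt_continuous (V := R_CompleteNormedModule)).
    intros z _. apply continuity_2d_pt_snd, HF, Hin, Hy.
Qed.

Lemma is_RInt_derive_R (F f : R -> R) A B l :
  (forall v, is_derive F v (f v)) -> (forall v, continuity_pt f v) -> F B - F A = l ->
  is_RInt f A B l.
Proof.
  intros Hd Hc <-. apply (is_RInt_derive (V := R_CompleteNormedModule)).
  - intros; apply Hd.
  - intros; apply continuity_pt_filterlim, Hc.
Qed.

Lemma derive_zero_const (K : R -> R) s0 s1 : s0 <= s1 ->
  (forall x, s0 < x < s1 -> is_derive K x 0) ->
  (forall x, s0 <= x <= s1 -> continuity_pt K x) -> K s1 = K s0.
Proof.
  intros Hle Hd Hc.
  destruct (MVT_gen K s0 s1 (fun _ => 0)) as (c & _ & E).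
  - intros x Hx. rewrite Rmin_left, Rmax_right in Hx by lra. apply Hd; lra.
  - intros x Hx. rewrite Rmin_left, Rmax_right in Hx by lra. apply Hc; lra.
  - lra.
Qed.

Lemma continuity_pt_const_right (f : R -> R) x0 c :
  continuity_pt f x0 -> (forall x, x0 < x < x0 + 1 -> f x = c) -> f x0 = c.
Proof.
  intros Hc Hf. destruct (Req_dec (f x0) c) as [|Hne]; [assumption|exfalso].
  destruct (Hc (Rabs (f x0 - c))) as (d & Hd & Hdd); [apply Rabs_pos_lt; lra|].
  set (x := x0 + Rmin (d/2) (1/2)).
  assert (Hx : 0 < x - x0 < d /\ x - x0 < 1)
    by (pose proof (Rmin_l (d/2) (1/2)); pose proof (Rmin_r (d/2) (1/2));
        assert (0 < Rmin (d/2) (1/2)) by (apply Rmin_pos; lra); unfold x; lra).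
  assert (Hxd : R_dist (f x) (f x0) < Rabs (f x0 - c)).
  { apply Hdd. split; [split; [exact I | lra]|]. simpl. unfold R_dist.
    rewrite Rabs_pos_eq; lra. }
  rewrite (Hf x) in Hxd by lra. unfold R_dist in Hxd. rewrite Rabs_minus_sym in Hxd. lra.
Qed.

Section EulerEquation.
Variables I I' I'' : R -> R.
Hypothesis I_derive : forall s, -1 < s < 1 -> is_derive I s (I' s).
Hypothesis I'_derive : forall s, -1 < s < 1 -> is_derive I' s (I'' s).

Let I_continuous s : -1 < s < 1 -> continuity_pt I s.
Proof. intros Hs. exact (is_derive_continuity_pt _ _ _ (I_derive s Hs)). Qed.
Let I'_continuous s : -1 < s < 1 -> continuity_pt I' s.
Proof. intros Hs. exact (is_derive_continuity_pt _ _ _ (I'_derive s Hs)). Qed.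

Lemma euler_eq0_const :
  (forall s, -1 < s < 1 -> s*s*I'' s + s*I' s = 0) -> forall s, 0 <= s < 1 -> I s = I 0.
Proof.
  intros E.
  assert (HI' : forall x, 0 < x < 1 -> I' x = 0).
  { intros x Hx.
    assert (Hk : x * I' x = 0 * I' 0).
    { apply (derive_zero_const (fun s => s * I' s)); [lra| |].
      - intros y Hy. eapply is_derive_val.
        + apply is_derive_mult_R; [apply is_derive_id_R | apply I'_derive; lra].
        + pose proof (E y ltac:(lra)). apply Rmult_eq_reg_l with y; [nra | lra].
      - intros y Hy.
        apply continuity_pt_mult; [apply continuity_pt_id | apply I'_continuous; lra]. }
    nra. }
  intros s Hs. destruct (Req_dec s 0) as [->|Hs0]; [reflexivity|].
  apply derive_zero_const; [lra| |].
  - intros y Hy. rewrite <- (HI' y) by lra. apply I_derive; lra.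
  - intros y Hy. apply I_continuous; lra.
Qed.

Lemma euler_eq1_linear :
  (forall s, -1 < s < 1 -> s*s*I'' s + s*I' s - I s = 0) -> forall s, 0 < s < 1 -> I s = s * I' 0.
Proof.
  intros E.
  assert (HI' : forall x, 0 < x < 1 -> x * I' x = I x).
  { intros x Hx.
    assert (Hk : x * (x * I' x - I x) = 0 * (0 * I' 0 - I 0)).
    { apply (derive_zero_const (fun s => s * (s * I' s - I s))); [lra| |].
      - intros y Hy. eapply is_derive_val.
        + apply is_derive_mult_R; [apply is_derive_id_R|].
          apply is_derive_minus_R; [|apply I_derive; lra].
          apply is_derive_mult_R; [apply is_derive_id_R | apply I'_derive; lra].
        + pose proof (E y ltac:(lra)). lra.
      - intros y Hy. apply continuity_pt_mult; [apply continuity_pt_id|].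
        apply continuity_pt_minus; [|apply I_continuous; lra].
        apply continuity_pt_mult; [apply continuity_pt_id | apply I'_continuous; lra]. }
    nra. }
  assert (Hratio : forall x y, 0 < x <= y -> y < 1 -> I y / y = I x / x).
  { intros x y Hxy Hy. apply (derive_zero_const (fun s => I s / s)); [lra| |].
    - intros z Hz. eapply is_derive_val.
      + apply (is_derive_div I (fun s => s)); [apply I_derive; lra | apply is_derive_id_R | lra].
      + simpl. unfold minus, plus, opp, mult, scal; simpl. unfold mult; simpl.
        rewrite <- (HI' z) by lra. field. lra.
    - intros z Hz.
      apply continuity_pt_div; [apply I_continuous; lra | apply continuity_pt_id | lra]. }
  intros s Hs.
  assert (I' 0 = I s / s) as ->; [|field; lra].
  apply continuity_pt_const_right; [apply I'_continuous; lra|].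
  intros x Hx. replace (I' x) with (I x / x) by (rewrite <- (HI' x) by lra; field; lra).
  destruct (Rle_dec x s); [symmetry|]; apply Hratio; lra.
Qed.

End EulerEquation.

Lemma is_RInt_cos_2PI : is_RInt cos 0 (2*PI) 0.
Proof.
  apply (is_RInt_derive_R sin).
  - intros; auto_derive; auto; ring.
  - apply continuity_cos.
  - rewrite sin_2PI, sin_0; ring.
Qed.

Lemma is_RInt_sin_2PI : is_RInt sin 0 (2*PI) 0.
Proof.
  apply (is_RInt_derive_R (fun v => - cos v)).
  - intros; auto_derive; auto; ring.
  - apply continuity_sin.
  - rewrite cos_2PI, cos_0; ring.
Qed.

Lemma is_RInt_cos_cos_2PI : is_RInt (fun v => cos v * cos v) 0 (2*PI) PI.
Proof.
  apply (is_RInt_derive_R (fun v => v/2 + sin v * cos v / 2)).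
  - intros v. auto_derive; auto. pose proof (sin2_cos2 v). unfold Rsqr in *. nra.
  - intros; apply continuity_pt_mult; apply continuity_cos.
  - rewrite sin_2PI, sin_0; field.
Qed.

Lemma is_RInt_sin_sin_2PI : is_RInt (fun v => sin v * sin v) 0 (2*PI) PI.
Proof.
  apply (is_RInt_derive_R (fun v => v/2 - sin v * cos v / 2)).
  - intros v. auto_derive; auto. pose proof (sin2_cos2 v). unfold Rsqr in *. nra.
  - intros; apply continuity_pt_mult; apply continuity_sin.
  - rewrite sin_2PI, sin_0; field.
Qed.

Lemma is_RInt_sin_cos_2PI : is_RInt (fun v => sin v * cos v) 0 (2*PI) 0.
Proof.
  apply (is_RInt_derive_R (fun v => sin v * sin v / 2)).
  - intros v. auto_derive; auto. field.
  - intros; apply continuity_pt_mult; [apply continuity_sin | apply continuity_cos].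
  - rewrite sin_2PI, sin_0; field.
Qed.

(* With [w = a + i b] and [z = X + i Y], the Moebius map [phi z = (z + w) / (1 + conj w z)]
   has [1 + conj w z = mob_den_re + i mob_den_im], [mob_den = |1 + conj w z|^2],
   [phi = mob_re + i mob_im], [phi' = kappa / (1 + conj w z)^2 = dmob_re + i dmob_im] and
   [phi'' = -2 kappa conj w / (1 + conj w z)^3 = d2mob_re + i d2mob_im].
   Along [z = s e^(iv)], [mob_P + i mob_Q = phi z] and its [s]-derivatives are
   [mob_Ps + i mob_Qs = phi' z e^(iv)] and [mob_Pss + i mob_Qss = phi'' z e^(2iv)]. *)
Section Mobius.
Variables a b : R.

Definition kappa := 1 - (a*a + b*b).
Definition mob_den_re X Y := 1 + a*X + b*Y.
Definition mob_den_im X Y := a*Y - b*X.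
Definition mob_den X Y := mob_den_re X Y * mob_den_re X Y + mob_den_im X Y * mob_den_im X Y.
Definition mob_den3_re X Y := mob_den_re X Y * mob_den_re X Y * mob_den_re X Y
  - 3 * mob_den_re X Y * mob_den_im X Y * mob_den_im X Y.
Definition mob_den3_im X Y := mob_den_im X Y * mob_den_im X Y * mob_den_im X Y
  - 3 * mob_den_re X Y * mob_den_re X Y * mob_den_im X Y.

Definition mob_re X Y := ((X+a) * mob_den_re X Y + (Y+b) * mob_den_im X Y) / mob_den X Y.
Definition mob_im X Y := ((Y+b) * mob_den_re X Y - (X+a) * mob_den_im X Y) / mob_den X Y.
Definition dmob_re X Y := kappa * (mob_den_re X Y * mob_den_re X Y
  - mob_den_im X Y * mob_den_im X Y) / (mob_den X Y * mob_den X Y).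
Definition dmob_im X Y :=
  - (2 * kappa * mob_den_re X Y * mob_den_im X Y) / (mob_den X Y * mob_den X Y).
Definition d2mob_re X Y := -2 * kappa * (a * mob_den3_re X Y + b * mob_den3_im X Y)
  / (mob_den X Y * mob_den X Y * mob_den X Y).
Definition d2mob_im X Y := -2 * kappa * (a * mob_den3_im X Y - b * mob_den3_re X Y)
  / (mob_den X Y * mob_den X Y * mob_den X Y).

Definition mob_P s v := mob_re (s * cos v) (s * sin v).
Definition mob_Q s v := mob_im (s * cos v) (s * sin v).
Definition mob_Ps s v :=
  dmob_re (s * cos v) (s * sin v) * cos v - dmob_im (s * cos v) (s * sin v) * sin v.
Definition mob_Qs s v :=
  dmob_im (s * cos v) (s * sin v) * cos v + dmob_re (s * cos v) (s * sin v) * sin v.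
Definition mob_Pss s v := d2mob_re (s * cos v) (s * sin v) * (cos v * cos v - sin v * sin v)
  - d2mob_im (s * cos v) (s * sin v) * (2 * cos v * sin v).
Definition mob_Qss s v := d2mob_im (s * cos v) (s * sin v) * (cos v * cos v - sin v * sin v)
  + d2mob_re (s * cos v) (s * sin v) * (2 * cos v * sin v).

End Mobius.

Ltac unfold_mob := unfold mob_P, mob_Q, mob_Ps, mob_Qs, mob_Pss, mob_Qss, mob_re, mob_im,
  dmob_re, dmob_im, d2mob_re, d2mob_im, mob_den3_re, mob_den3_im, kappa, mob_den, mob_den_re,
  mob_den_im in *.

Ltac solve_mob_derive Hd :=
  unfold_mob; auto_derive;
  [repeat split; repeat apply Rmult_integral_contrapositive_currified; exact Hd
  | field; exact Hd].

Lemma mob_P_derive_s a b s v : mob_den a b (s * cos v) (s * sin v) <> 0 ->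
  is_derive (fun s => mob_P a b s v) s (mob_Ps a b s v).
Proof. intros Hd. solve_mob_derive Hd. Qed.
Lemma mob_Q_derive_s a b s v : mob_den a b (s * cos v) (s * sin v) <> 0 ->
  is_derive (fun s => mob_Q a b s v) s (mob_Qs a b s v).
Proof. intros Hd. solve_mob_derive Hd. Qed.
Lemma mob_Ps_derive_s a b s v : mob_den a b (s * cos v) (s * sin v) <> 0 ->
  is_derive (fun s => mob_Ps a b s v) s (mob_Pss a b s v).
Proof. intros Hd. solve_mob_derive Hd. Qed.
Lemma mob_Qs_derive_s a b s v : mob_den a b (s * cos v) (s * sin v) <> 0 ->
  is_derive (fun s => mob_Qs a b s v) s (mob_Qss a b s v).
Proof. intros Hd. solve_mob_derive Hd. Qed.
Lemma mob_P_derive_v a b s v : mob_den a b (s * cos v) (s * sin v) <> 0 ->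
  is_derive (fun v => mob_P a b s v) v (- s * mob_Qs a b s v).
Proof. intros Hd. solve_mob_derive Hd. Qed.
Lemma mob_Q_derive_v a b s v : mob_den a b (s * cos v) (s * sin v) <> 0 ->
  is_derive (fun v => mob_Q a b s v) v (s * mob_Ps a b s v).
Proof. intros Hd. solve_mob_derive Hd. Qed.
Lemma mob_Ps_derive_v a b s v : mob_den a b (s * cos v) (s * sin v) <> 0 ->
  is_derive (fun v => mob_Ps a b s v) v (- (s * mob_Qss a b s v + mob_Qs a b s v)).
Proof. intros Hd. solve_mob_derive Hd. Qed.
Lemma mob_Qs_derive_v a b s v : mob_den a b (s * cos v) (s * sin v) <> 0 ->
  is_derive (fun v => mob_Qs a b s v) v (s * mob_Pss a b s v + mob_Ps a b s v).
Proof. intros Hd. solve_mob_derive Hd. Qed.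

Lemma mob_den_lower_bound a b X Y : a*a + b*b < 1 -> X*X + Y*Y <= 1 ->
  (1 - sqrt (a*a + b*b)) ^ 2 <= mob_den a b X Y.
Proof.
  intros Hw Hz. set (r := sqrt (a*a + b*b)).
  assert (Hr2 : r * r = a*a + b*b) by (apply sqrt_sqrt; nra).
  assert (Hr : 0 <= r) by apply sqrt_pos.
  clearbody r.
  assert (Hcs : (a*X + b*Y) * (a*X + b*Y) <= r * r).
  { pose proof (Rle_0_sqr (a*Y - b*X)). unfold Rsqr in *.
    assert ((a*a + b*b) * (X*X + Y*Y) <= a*a + b*b) by nra. nra. }
  assert (Hlow : 0 <= 1 - r <= 1 + a*X + b*Y) by nra.
  unfold mob_den, mob_den_re, mob_den_im.
  pose proof (Rle_0_sqr (a*Y - b*X)). unfold Rsqr in *.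
  assert ((1 - r) * (1 - r) <= (1 + a*X + b*Y) * (1 + a*X + b*Y))
    by (apply Rmult_le_compat; lra).
  simpl. lra.
Qed.

Lemma mob_den_pos a b X Y : a*a + b*b < 1 -> X*X + Y*Y <= 1 -> 0 < mob_den a b X Y.
Proof.
  intros Hw Hz. eapply Rlt_le_trans; [|exact (mob_den_lower_bound a b X Y Hw Hz)].
  assert (sqrt (a*a + b*b) < 1) by (rewrite <- sqrt_1; apply sqrt_lt_1; nra).
  nra.
Qed.

Lemma mob_norm2 a b X Y : mob_den a b X Y <> 0 ->
  mob_re a b X Y ^ 2 + mob_im a b X Y ^ 2 = 1 - kappa a b * (1 - (X*X + Y*Y)) / mob_den a b X Y.
Proof.
  intros Hd. unfold mob_re, mob_im, kappa. unfold mob_den, mob_den_re, mob_den_im in *.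
  field. exact Hd.
Qed.

Lemma polar_norm2 s v : (s * cos v) * (s * cos v) + (s * sin v) * (s * sin v) = s * s.
Proof. pose proof (sin2_cos2 v). unfold Rsqr in *. nra. Qed.

Lemma polar_norm2_pow s v : (s * cos v)^2 + (s * sin v)^2 = s * s.
Proof. rewrite <- (polar_norm2 s v). ring. Qed.

Lemma mob_den_polar_neq0 a b s v : a*a + b*b < 1 -> -1 < s < 1 ->
  mob_den a b (s * cos v) (s * sin v) <> 0.
Proof. intros Hw Hs. apply Rgt_not_eq, mob_den_pos; [exact Hw | rewrite polar_norm2; nra]. Qed.

Lemma mob_in_disk a b s v : a*a + b*b < 1 -> -1 < s < 1 -> in_disk (mob_P a b s v) (mob_Q a b s v).
Proof.
  intros Hw Hs. unfold in_disk, mob_P, mob_Q.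
  assert (Hd : 0 < mob_den a b (s * cos v) (s * sin v))
    by (apply mob_den_pos; rewrite ?polar_norm2; nra).
  rewrite mob_norm2, polar_norm2 by lra.
  assert (0 < kappa a b * (1 - s * s) / mob_den a b (s * cos v) (s * sin v)).
  { apply Rdiv_lt_0_compat; [apply Rmult_lt_0_compat; unfold kappa|]; nra. }
  lra.
Qed.

Ltac solve_mob_continuity Hd :=
  unfold_mob;
  repeat (unfold Rdiv; first
  [ apply continuity_2d_pt_plus | apply continuity_2d_pt_minus
  | apply continuity_2d_pt_mult | apply continuity_2d_pt_opp
  | apply continuity_2d_pt_id1 | apply continuity_2d_pt_id2
  | apply continuity_2d_pt_const | apply continuity_2d_pt_inv
  | apply (continuity_1d_2d_pt_comp cos (fun _ v => v)); [apply continuity_cos|]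
  | apply (continuity_1d_2d_pt_comp sin (fun _ v => v)); [apply continuity_sin|] ]);
  repeat apply Rmult_integral_contrapositive_currified; exact Hd.

Section MobiusContinuity.
Variables (a b s v : R).
Hypotheses (Hw : a*a + b*b < 1) (Hs : -1 < s < 1).
Let Hd := mob_den_polar_neq0 a b s v Hw Hs.

Lemma mob_P_continuous : continuity_2d_pt (mob_P a b) s v.
Proof. solve_mob_continuity Hd. Qed.
Lemma mob_Q_continuous : continuity_2d_pt (mob_Q a b) s v.
Proof. solve_mob_continuity Hd. Qed.
Lemma mob_Ps_continuous : continuity_2d_pt (mob_Ps a b) s v.
Proof. solve_mob_continuity Hd. Qed.
Lemma mob_Qs_continuous : continuity_2d_pt (mob_Qs a b) s v.
Proof. solve_mob_continuity Hd. Qed.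
Lemma mob_Pss_continuous : continuity_2d_pt (mob_Pss a b) s v.
Proof. solve_mob_continuity Hd. Qed.
Lemma mob_Qss_continuous : continuity_2d_pt (mob_Qss a b) s v.
Proof. solve_mob_continuity Hd. Qed.
End MobiusContinuity.

Lemma mob_P_0 a b v : mob_P a b 0 v = a.
Proof. unfold_mob. field_simplify; [reflexivity | lra ..]. Qed.
Lemma mob_Q_0 a b v : mob_Q a b 0 v = b.
Proof. unfold_mob. field_simplify; [reflexivity | lra ..]. Qed.
Lemma mob_Ps_0 a b v : mob_Ps a b 0 v = kappa a b * cos v.
Proof. unfold_mob. field_simplify; [reflexivity | lra ..]. Qed.
Lemma mob_Qs_0 a b v : mob_Qs a b 0 v = kappa a b * sin v.
Proof. unfold_mob. field_simplify; [reflexivity | lra ..]. Qed.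

Lemma C1_continuous (f : R -> R -> R) x y : C1_on in_disk f -> in_disk x y ->
  continuity_2d_pt f x y.
Proof. intros Hf Hxy. apply (Hf x y Hxy). Qed.
Lemma C1_Dx_continuous (f : R -> R -> R) x y : C1_on in_disk f -> in_disk x y ->
  continuity_2d_pt (Dx f) x y.
Proof. intros Hf Hxy. apply (Hf x y Hxy). Qed.
Lemma C1_Dy_continuous (f : R -> R -> R) x y : C1_on in_disk f -> in_disk x y ->
  continuity_2d_pt (Dy f) x y.
Proof. intros Hf Hxy. apply (Hf x y Hxy). Qed.

Definition pullback (F : R -> R -> R) a b s v := F (mob_P a b s v) (mob_Q a b s v).
Definition pullback_ds F a b s v :=
  pullback (Dx F) a b s v * mob_Ps a b s v + pullback (Dy F) a b s v * mob_Qs a b s v.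
Definition pullback_dss F a b s v :=
  pullback_ds (Dx F) a b s v * mob_Ps a b s v + pullback (Dx F) a b s v * mob_Pss a b s v
  + (pullback_ds (Dy F) a b s v * mob_Qs a b s v + pullback (Dy F) a b s v * mob_Qss a b s v).
Definition pullback_dv F a b s v :=
  s * (pullback (Dy F) a b s v * mob_Ps a b s v - pullback (Dx F) a b s v * mob_Qs a b s v).
Definition pullback_dvv F a b s v :=
  s * (pullback_dv (Dy F) a b s v * mob_Ps a b s v
       - pullback (Dy F) a b s v * (s * mob_Qss a b s v + mob_Qs a b s v)
       - (pullback_dv (Dx F) a b s v * mob_Qs a b s v
          + pullback (Dx F) a b s v * (s * mob_Pss a b s v + mob_Ps a b s v))).

Section Pullback.
Variables (a b : R).
Hypothesis Hw : a*a + b*b < 1.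

Lemma pullback_derive_s F s v : C1_on in_disk F -> -1 < s < 1 ->
  is_derive (fun s => pullback F a b s v) s (pullback_ds F a b s v).
Proof.
  intros HF Hs. apply (is_derive_comp_C1 F (fun s => mob_P a b s v) (fun s => mob_Q a b s v));
    [exact HF | apply mob_in_disk; assumption | |];
    [apply mob_P_derive_s | apply mob_Q_derive_s]; apply mob_den_polar_neq0; assumption.
Qed.

Lemma pullback_derive_v F s v : C1_on in_disk F -> -1 < s < 1 ->
  is_derive (fun v => pullback F a b s v) v (pullback_dv F a b s v).
Proof.
  intros HF Hs. eapply is_derive_val.
  - apply (is_derive_comp_C1 F (fun v => mob_P a b s v) (fun v => mob_Q a b s v));
      [exact HF | apply mob_in_disk; assumption | |];
      [apply mob_P_derive_v | apply mob_Q_derive_v]; apply mob_den_polar_neq0; assumption.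
  - unfold pullback_dv, pullback. ring.
Qed.

Lemma pullback_ds_derive F s v : C1_on in_disk (Dx F) -> C1_on in_disk (Dy F) -> -1 < s < 1 ->
  is_derive (fun s => pullback_ds F a b s v) s (pullback_dss F a b s v).
Proof.
  intros HFx HFy Hs. unfold pullback_ds. eapply is_derive_val.
  - apply is_derive_plus_R; apply is_derive_mult_R;
      auto using pullback_derive_s; [apply mob_Ps_derive_s | apply mob_Qs_derive_s];
      apply mob_den_polar_neq0; assumption.
  - reflexivity.
Qed.

Lemma pullback_dv_derive F s v : C1_on in_disk (Dx F) -> C1_on in_disk (Dy F) -> -1 < s < 1 ->
  is_derive (fun v => pullback_dv F a b s v) v (pullback_dvv F a b s v).
Proof.
  intros HFx HFy Hs. unfold pullback_dv. eapply is_derive_val.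
  - apply is_derive_scal, is_derive_minus_R; apply is_derive_mult_R;
      auto using pullback_derive_v; [apply mob_Ps_derive_v | apply mob_Qs_derive_v];
      apply mob_den_polar_neq0; assumption.
  - unfold pullback_dvv. ring.
Qed.

Lemma pullback_continuous F s v : (forall x y, in_disk x y -> continuity_2d_pt F x y) ->
  -1 < s < 1 -> continuity_2d_pt (pullback F a b) s v.
Proof.
  intros HF Hs. apply (continuity_2d_pt_comp F (mob_P a b) (mob_Q a b)).
  - apply HF, mob_in_disk; assumption.
  - apply mob_P_continuous; assumption.
  - apply mob_Q_continuous; assumption.
Qed.

End Pullback.

Definition moment H a b (w : R -> R) s := RInt (fun v => pullback H a b s v * w v) 0 (2*PI).
Definition moment_ds H a b (w : R -> R) s := RInt (fun v => pullback_ds H a b s v * w v) 0 (2*PI).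
Definition moment_dss H a b (w : R -> R) s := RInt (fun v => pullback_dss H a b s v * w v) 0 (2*PI).

Section HarmonicPullback.
Variables (H : R -> R -> R) (a b : R).
Hypotheses (hH : harmonic_disk H) (Hw : a*a + b*b < 1).

Let C1H : C1_on in_disk H := proj1 (proj1 hH).
Let C1Hx : C1_on in_disk (Dx H) := proj1 (proj2 (proj1 hH)).
Let C1Hy : C1_on in_disk (Dy H) := proj2 (proj2 (proj1 hH)).

Lemma pullback_laplace_polar s v : -1 < s < 1 ->
  s * s * pullback_dss H a b s v + s * pullback_ds H a b s v + pullback_dvv H a b s v = 0.
Proof.
  intros Hs. pose proof (proj2 hH _ _ (mob_in_disk a b s v Hw Hs)) as HL.
  unfold pullback_dss, pullback_dvv, pullback_ds, pullback_dv, pullback in *.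
  set (P := mob_P a b s v) in *. set (Q := mob_Q a b s v) in *.
  replace (Dy (Dy H) P Q) with (- Dx (Dx H) P Q) by lra.
  ring.
Qed.

Ltac solve_pullback_continuity :=
  unfold pullback_dss, pullback_dvv, pullback_ds, pullback_dv;
  repeat first
  [ apply mob_Ps_continuous | apply mob_Qs_continuous
  | apply mob_Pss_continuous | apply mob_Qss_continuous
  | apply pullback_continuous; [assumption| |assumption]; intros x y Hxy;
    first [ apply (C1_continuous _ _ _ C1H Hxy) | apply (C1_continuous _ _ _ C1Hx Hxy)
          | apply (C1_continuous _ _ _ C1Hy Hxy) | apply (C1_Dx_continuous _ _ _ C1Hx Hxy)
          | apply (C1_Dy_continuous _ _ _ C1Hx Hxy) | apply (C1_Dx_continuous _ _ _ C1Hy Hxy)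
          | apply (C1_Dy_continuous _ _ _ C1Hy Hxy) ]
  | apply continuity_2d_pt_plus | apply continuity_2d_pt_minus | apply continuity_2d_pt_mult
  | apply continuity_2d_pt_opp
  | apply continuity_2d_pt_id1 | apply continuity_2d_pt_const
  | assumption ].

Lemma pullback_H_continuous s v : -1 < s < 1 -> continuity_2d_pt (pullback H a b) s v.
Proof. intros Hs. solve_pullback_continuity. Qed.
Lemma pullback_ds_continuous s v : -1 < s < 1 -> continuity_2d_pt (pullback_ds H a b) s v.
Proof. intros Hs. solve_pullback_continuity. Qed.
Lemma pullback_dss_continuous s v : -1 < s < 1 -> continuity_2d_pt (pullback_dss H a b) s v.
Proof. intros Hs. solve_pullback_continuity. Qed.
Lemma pullback_dvv_continuous s v : -1 < s < 1 -> continuity_2d_pt (pullback_dvv H a b) s v.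
Proof. intros Hs. solve_pullback_continuity. Qed.

Section Weighted.
Variables (w w' : R -> R) (lam : R).
Hypothesis w_derive : forall v, is_derive w v (w' v).
Hypothesis w'_derive : forall v, is_derive w' v (- lam * w v).
Hypotheses (w_periodic : w (2*PI) = w 0) (w'_periodic : w' (2*PI) = w' 0).

Let w_continuous v : continuity_pt w v := is_derive_continuity_pt _ _ _ (w_derive v).

Let weighted_continuous (F : R -> R -> R) :
  (forall s v, -1 < s < 1 -> continuity_2d_pt F s v) ->
  forall s, -1 < s < 1 -> forall v, continuity_2d_pt (fun s v => F s v * w v) s v.
Proof.
  intros HF s Hs v. apply continuity_2d_pt_mult; [apply HF, Hs|].
  apply (continuity_1d_2d_pt_comp w (fun _ v => v));
    [apply w_continuous | apply continuity_2d_pt_id2].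
Qed.

Lemma moment_derive s : -1 < s < 1 -> is_derive (moment H a b w) s (moment_ds H a b w s).
Proof.
  apply (is_derive_RInt_param_open
    (fun s v => pullback H a b s v * w v) (fun s v => pullback_ds H a b s v * w v) (-1) 1).
  - intros u Hu v. apply (is_derive_scal_l (V := R_NormedModule)), pullback_derive_s; assumption.
  - apply weighted_continuous. intros; apply pullback_ds_continuous; assumption.
  - apply weighted_continuous. intros; apply pullback_H_continuous; assumption.
Qed.

Lemma moment_ds_derive s : -1 < s < 1 -> is_derive (moment_ds H a b w) s (moment_dss H a b w s).
Proof.
  apply (is_derive_RInt_param_open
    (fun s v => pullback_ds H a b s v * w v) (fun s v => pullback_dss H a b s v * w v) (-1) 1).
  - intros u Hu v. apply (is_derive_scal_l (V := R_NormedModule)), pullback_ds_derive; assumption.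
  - apply weighted_continuous. intros; apply pullback_dss_continuous; assumption.
  - apply weighted_continuous. intros; apply pullback_ds_continuous; assumption.
Qed.

Lemma pullback_dvv_integral s : -1 < s < 1 ->
  is_RInt (fun v => pullback_dvv H a b s v * w v + lam * (pullback H a b s v * w v)) 0 (2*PI) 0.
Proof.
  intros Hs.
  apply (is_RInt_derive_R (fun v => pullback_dv H a b s v * w v - pullback H a b s v * w' v)).
  - intros v. eapply is_derive_val.
    + apply is_derive_minus_R; apply is_derive_mult_R;
        auto using pullback_derive_v, pullback_dv_derive.
    + ring.
  - intros v.
    assert (Hc : forall F, continuity_2d_pt F s v -> continuity_pt (fun v => F s v * w v) v)
      by (intros F HF; apply continuity_pt_mult;
          [apply continuity_pt_filterlim, continuity_2d_pt_snd, HF | apply w_continuous]).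
    apply continuity_pt_plus;
      [|apply continuity_pt_mult; [apply continuity_pt_const; intros ? ?; reflexivity|]];
      apply Hc; [apply pullback_dvv_continuous | apply pullback_H_continuous]; assumption.
  - rewrite w_periodic, w'_periodic.
    unfold pullback_dv, pullback, mob_P, mob_Q, mob_Ps, mob_Qs.
    rewrite cos_2PI, sin_2PI, cos_0, sin_0. ring.
Qed.

Lemma moment_euler s : -1 < s < 1 ->
  s * s * moment_dss H a b w s + s * moment_ds H a b w s - lam * moment H a b w s = 0.
Proof.
  intros Hs.
  assert (Hint : forall F, (forall s v, -1 < s < 1 -> continuity_2d_pt F s v) ->
    is_RInt (fun v => F s v * w v) 0 (2*PI) (RInt (fun v => F s v * w v) 0 (2*PI))).
  { intros F HF. apply (is_RInt_continuity_2d_pt (fun s v => F s v * w v)).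
    apply weighted_continuous; assumption. }
  assert (Hsum : is_RInt (fun v => s * s * (pullback_dss H a b s v * w v)
      + s * (pullback_ds H a b s v * w v)
      + (pullback_dvv H a b s v * w v + lam * (pullback H a b s v * w v))
      - lam * (pullback H a b s v * w v)) 0 (2*PI)
    (s * s * moment_dss H a b w s + s * moment_ds H a b w s + 0 - lam * moment H a b w s)).
  { apply is_RInt_minus_R; [apply is_RInt_plus_R; [apply is_RInt_plus_R|]|].
    - apply is_RInt_scal_R, Hint. intros; apply pullback_dss_continuous; assumption.
    - apply is_RInt_scal_R, Hint. intros; apply pullback_ds_continuous; assumption.
    - apply pullback_dvv_integral, Hs.
    - apply is_RInt_scal_R, Hint. intros; apply pullback_H_continuous; assumption. }
  rewrite Rplus_0_r in Hsum. rewrite <- (is_RInt_unique _ _ _ _ Hsum).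
  rewrite (RInt_ext _ (fun _ => 0)), RInt_const; [exact (Rmult_0_r _)|].
  intros v _. rewrite <- (Rmult_0_l (w v)), <- (pullback_laplace_polar s v Hs).
  ring_R.
Qed.

End Weighted.

Lemma moment_is_RInt (w : R -> R) s : (forall v, continuity_pt w v) -> -1 < s < 1 ->
  is_RInt (fun v => pullback H a b s v * w v) 0 (2*PI) (moment H a b w s).
Proof.
  intros Hc Hs. apply (is_RInt_continuity_2d_pt (fun s v => pullback H a b s v * w v)).
  intros v. apply continuity_2d_pt_mult; [apply pullback_H_continuous; assumption|].
  apply (continuity_1d_2d_pt_comp w (fun _ v => v)); [apply Hc | apply continuity_2d_pt_id2].
Qed.

Lemma moment_one s : 0 <= s < 1 -> moment H a b (fun _ => 1) s = 2 * PI * H a b.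
Proof.
  intros Hs.
  assert (Hderiv : forall v, is_derive (fun _ : R => 1) v 0) by (intros; auto_derive; auto).
  assert (Hderiv' : forall v, is_derive (fun _ : R => 0) v (- 0 * 1))
    by (intros; auto_derive; auto; ring).
  transitivity (moment H a b (fun _ => 1) 0).
  - apply (euler_eq0_const _ (moment_ds H a b (fun _ => 1)) (moment_dss H a b (fun _ => 1)));
      [| | | exact Hs]; intros s' Hs'.
    + apply moment_derive with (w' := fun _ => 0); assumption.
    + apply moment_ds_derive with (w' := fun _ => 0); assumption.
    + rewrite <- (moment_euler _ (fun _ => 0) 0 Hderiv Hderiv' eq_refl eq_refl s' Hs').
      ring.
  - unfold moment. rewrite (RInt_ext _ (fun _ => H a b)), RInt_const.
    + change ((2 * PI - 0) * H a b = 2 * PI * H a b). ring.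
    + intros v _. unfold pullback. rewrite mob_P_0, mob_Q_0. ring_R.
Qed.

Lemma moment_linear (w w' : R -> R) s :
  (forall v, is_derive w v (w' v)) -> (forall v, is_derive w' v (- w v)) ->
  w (2*PI) = w 0 -> w' (2*PI) = w' 0 -> 0 < s < 1 ->
  moment H a b w s = s * moment_ds H a b w 0.
Proof.
  intros Hd Hd' Hp Hp' Hs.
  assert (Hd1 : forall v, is_derive w' v (- 1 * w v))
    by (intros v; eapply is_derive_val; [apply Hd' | ring]).
  apply (euler_eq1_linear _ (moment_ds H a b w) (moment_dss H a b w)); [| | | exact Hs];
    intros s' Hs'.
  - apply moment_derive with (w' := w'); assumption.
  - apply moment_ds_derive with (w' := w'); assumption.
  - rewrite <- (moment_euler w w' 1 Hd Hd1 Hp Hp' s' Hs'). ring.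
Qed.

Lemma pullback_ds_at_0 v :
  pullback_ds H a b 0 v = kappa a b * (Dx H a b * cos v + Dy H a b * sin v).
Proof. unfold pullback_ds, pullback. rewrite mob_P_0, mob_Q_0, mob_Ps_0, mob_Qs_0. ring. Qed.

Lemma moment_ds_cos_0 : moment_ds H a b cos 0 = kappa a b * Dx H a b * PI.
Proof.
  apply is_RInt_unique.
  apply (is_RInt_ext (fun v =>
    kappa a b * (Dx H a b * (cos v * cos v) + Dy H a b * (sin v * cos v)))).
  { intros v _. rewrite pullback_ds_at_0. ring_R. }
  replace (kappa a b * Dx H a b * PI) with (kappa a b * (Dx H a b * PI + Dy H a b * 0)) by ring.
  apply is_RInt_scal_R, is_RInt_plus_R; apply is_RInt_scal_R;
    [apply is_RInt_cos_cos_2PI | apply is_RInt_sin_cos_2PI].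
Qed.

Lemma moment_ds_sin_0 : moment_ds H a b sin 0 = kappa a b * Dy H a b * PI.
Proof.
  apply is_RInt_unique.
  apply (is_RInt_ext (fun v =>
    kappa a b * (Dx H a b * (sin v * cos v) + Dy H a b * (sin v * sin v)))).
  { intros v _. rewrite pullback_ds_at_0. ring_R. }
  replace (kappa a b * Dy H a b * PI) with (kappa a b * (Dx H a b * 0 + Dy H a b * PI)) by ring.
  apply is_RInt_scal_R, is_RInt_plus_R; apply is_RInt_scal_R;
    [apply is_RInt_sin_cos_2PI | apply is_RInt_sin_sin_2PI].
Qed.

Lemma u_of_circle_integral s : 0 < s < 1 ->
  is_RInt (fun v => pullback H a b s v * (1 + (a * cos v + b * sin v) / s)) 0 (2*PI)
    (2 * PI * u_of H a b).
Proof.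
  intros Hs.
  assert (Hcos : moment H a b cos s = s * (kappa a b * Dx H a b * PI)).
  { rewrite <- moment_ds_cos_0. apply (moment_linear cos (fun v => - sin v)); auto.
    - intros; auto_derive; auto; ring.
    - intros; auto_derive; auto; ring.
    - rewrite cos_2PI, cos_0; reflexivity.
    - rewrite sin_2PI, sin_0; reflexivity. }
  assert (Hsin : moment H a b sin s = s * (kappa a b * Dy H a b * PI)).
  { rewrite <- moment_ds_sin_0. apply (moment_linear sin cos); auto.
    - intros; auto_derive; auto; ring.
    - intros; auto_derive; auto; ring.
    - rewrite sin_2PI, sin_0; reflexivity.
    - rewrite cos_2PI, cos_0; reflexivity. }
  apply (is_RInt_ext (fun v => pullback H a b s v * 1
    + (a / s * (pullback H a b s v * cos v) + b / s * (pullback H a b s v * sin v)))).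
  { intros v _. field_R. lra. }
  replace (2 * PI * u_of H a b) with (moment H a b (fun _ => 1) s
    + (a / s * moment H a b cos s + b / s * moment H a b sin s)).
  2:{ rewrite moment_one, Hcos, Hsin by lra. unfold u_of, kappa. field. lra. }
  assert (Hs' : -1 < s < 1) by lra.
  apply is_RInt_plus_R; [|apply is_RInt_plus_R; apply is_RInt_scal_R];
    apply moment_is_RInt; auto using continuity_cos, continuity_sin.
  intros; apply continuity_pt_const; intros ? ?; reflexivity.
Qed.

End HarmonicPullback.

Lemma u_of_le_of_pullback_le H a b s M : harmonic_disk H -> a*a + b*b < s*s -> 0 < s < 1 ->
  (forall v, pullback H a b s v <= M) -> u_of H a b <= M.
Proof.
  intros hH Hws Hs Hg.
  assert (Hw : a*a + b*b < 1) by nra.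
  assert (Hweight : is_RInt (fun v => M * (1 + (a * cos v + b * sin v) / s)) 0 (2*PI) (M * (2*PI))).
  { apply is_RInt_scal_R.
    apply (is_RInt_ext (fun v => 1 + (a / s * cos v + b / s * sin v))); [intros v _; field_R; lra|].
    replace (2*PI) with ((2*PI - 0) * 1 + (a / s * 0 + b / s * 0)) at 2 by ring.
    apply is_RInt_plus_R;
      [exact (is_RInt_const 0 (2*PI) 1) | apply is_RInt_plus_R; apply is_RInt_scal_R];
      [apply is_RInt_cos_2PI | apply is_RInt_sin_2PI]. }
  assert (H2PI : 0 < 2*PI) by (pose proof PI_RGT_0; lra).
  enough (2*PI * u_of H a b <= M * (2*PI)) by nra.
  apply (is_RInt_le _ _ 0 (2*PI) _ _ (Rlt_le _ _ H2PI) (u_of_circle_integral H a b hH Hw s Hs)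
    Hweight).
  intros v _. apply Rmult_le_compat_r; [|apply Hg].
  assert (Hcs : (a * cos v + b * sin v) ^ 2 <= s * s).
  { pose proof (sin2_cos2 v). pose proof (Rle_0_sqr (a * sin v - b * cos v)).
    unfold Rsqr in *. nra. }
  assert (- s <= a * cos v + b * sin v) by nra.
  apply Rle_trans with (1 + (- s) / s); [right; field; lra|].
  apply Rplus_le_compat_l, Rmult_le_compat_r; [left; apply Rinv_0_lt_compat|]; lra.
Qed.

Lemma polar_coordinates x y : exists r al, 0 <= r /\ r * r = x^2 + y^2 /\
  0 <= al <= 2*PI /\ x = r * cos al /\ y = r * sin al.
Proof.
  set (r := sqrt (x^2 + y^2)). exists r.
  assert (Hr2 : r * r = x^2 + y^2) by (apply sqrt_sqrt; nra).
  assert (Hr0 : 0 <= r) by apply sqrt_pos.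
  clearbody r. pose proof PI_RGT_0.
  destruct (Req_dec r 0) as [E|NE].
  { exists 0. rewrite E in Hr2 |- *. repeat split; lra || nra. }
  set (c := x / r).
  assert (Hc : -1 <= c <= 1).
  { assert (-r <= x <= r) by nra.
    assert (r * / r = 1 /\ 0 < / r) by (split; [field | apply Rinv_0_lt_compat]; lra).
    unfold c, Rdiv. nra. }
  assert (Hsin : sqrt (1 - c²) = Rabs y / r).
  { replace (1 - c²) with ((y / r)²) by (unfold c, Rsqr; field_simplify_eq; [nra | lra]).
    rewrite sqrt_Rsqr_abs. unfold Rdiv. rewrite Rabs_mult, (Rabs_pos_eq (/ r)); [reflexivity|].
    left; apply Rinv_0_lt_compat; lra. }
  pose proof (acos_bound c).
  destruct (Rle_lt_dec 0 y) as [Hy|Hy].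
  - exists (acos c). rewrite cos_acos, sin_acos, Hsin, Rabs_pos_eq by auto.
    repeat split; try lra; unfold c; field; lra.
  - exists (2*PI - acos c).
    rewrite cos_minus, sin_minus, cos_2PI, sin_2PI, cos_acos, sin_acos, Hsin, Rabs_left by auto.
    repeat split; try lra; unfold c; field; lra.
Qed.

(* [clamp01 r = min (|r|, 1)], written with [Rabs] so that continuity is immediate. *)
Definition clamp01 r := (Rabs r + 1 - Rabs (Rabs r - 1)) / 2.

Lemma clamp01_bounds r : 0 <= clamp01 r <= 1.
Proof. unfold clamp01, Rabs; repeat destruct Rcase_abs; lra. Qed.

Lemma clamp01_id r : 0 <= r <= 1 -> clamp01 r = r.
Proof. intros Hr. unfold clamp01, Rabs; repeat destruct Rcase_abs; lra. Qed.

Lemma clamp01_continuous r : continuity_pt clamp01 r.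
Proof.
  assert (Hconst : forall c x, continuity_pt (fun _ => c) x)
    by (intros; apply continuity_pt_const; intros ? ?; reflexivity).
  unfold clamp01. apply continuity_pt_div; [| apply Hconst | lra].
  apply continuity_pt_minus; [apply continuity_pt_plus; [apply Rcontinuity_abs | apply Hconst]|].
  apply (continuity_pt_comp (fun r => Rabs r - 1) Rabs); [|apply Rcontinuity_abs].
  apply continuity_pt_minus; [apply Rcontinuity_abs | apply Hconst].
Qed.

Lemma u_le_near_circle H U M : C1_closed_disk_ext (u_of H) U ->
  (forall x y, on_circle x y -> U x y <= M) ->
  forall eps, 0 < eps -> exists d, 0 < d /\
    forall x y, in_disk x y -> 1 - d < x^2 + y^2 -> u_of H x y <= M + eps.
Proof.
  intros (_ & HUu & HUc & _) HM eps Heps.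
  set (V u v := U (clamp01 u * cos v) (clamp01 u * sin v)).
  assert (Hin : forall u v, in_cdisk (clamp01 u * cos v) (clamp01 u * sin v)).
  { intros u v. unfold in_cdisk. pose proof (clamp01_bounds u). pose proof (sin2_cos2 v).
    unfold Rsqr in *. nra. }
  assert (HV : forall u v, continuity_2d_pt V u v).
  { intros u v. apply (continuity_2d_pt_within_comp in_cdisk U (fun u v => clamp01 u * cos v)
      (fun u v => clamp01 u * sin v)); [apply HUc, Hin | exact Hin | |];
      apply continuity_2d_pt_mult;
      try (apply (continuity_1d_2d_pt_comp clamp01 (fun u _ => u));
           [apply clamp01_continuous | apply continuity_2d_pt_id1]);
      apply (continuity_1d_2d_pt_comp _ (fun _ v => v));
      auto using continuity_cos, continuity_sin, continuity_2d_pt_id2. }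
  destruct (uniform_continuity_2d V (1/2) (3/2) 0 (2*PI) (fun u v _ _ => HV u v)
    (mkposreal eps Heps)) as [du Hdu].
  exists (Rmin du (3/4)). split; [apply Rmin_pos; [apply cond_pos | lra]|].
  intros x y Hxy Hnear.
  pose proof (Rmin_l du (3/4)). pose proof (Rmin_r du (3/4)).
  destruct (polar_coordinates x y) as (r & al & Hr0 & Hr2 & Hal & Ex & Ey).
  unfold in_disk in Hxy.
  assert (Hr : 1/2 < r < 1) by nra.
  assert (Hu : V r al = u_of H x y)
    by (unfold V; rewrite clamp01_id, <- Ex, <- Ey by lra; apply HUu; exact Hxy).
  assert (HU1 : V 1 al <= M).
  { unfold V. rewrite clamp01_id, !Rmult_1_l by lra. apply HM. unfold on_circle.
    pose proof (sin2_cos2 al). unfold Rsqr in *. nra. }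
  assert (Hclose : Rabs (V r al - V 1 al) < eps).
  { apply (Hdu 1 al r al); try lra.
    - rewrite Rabs_left1 by lra. nra.
    - rewrite Rminus_eq_0, Rabs_R0. apply cond_pos. }
  apply Rabs_def2 in Hclose. lra.
Qed.

Lemma ray_weighted_le H M c sn rho r : C1_on in_disk H -> c*c + sn*sn = 1 ->
  0 < rho <= r -> r < 1 -> (forall t, rho <= t <= r -> u_of H (t*c) (t*sn) <= M) ->
  r*r / (1 - r*r) * (H (r*c) (r*sn) - M) <= rho*rho / (1 - rho*rho) * (H (rho*c) (rho*sn) - M).
Proof.
  intros C1H Hcs Hrho Hr Hu.
  set (L t := t*t / (1 - t*t) * (H (t*c) (t*sn) - M)).
  set (dL t := 2*t / ((1 - t*t) * (1 - t*t)) * (u_of H (t*c) (t*sn) - M)).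
  assert (HD : forall t, 0 < t < 1 -> is_derive L t (dL t)).
  { intros t Ht.
    assert (Hin : in_disk (t*c) (t*sn)).
    { unfold in_disk. replace ((t*c)^2 + (t*sn)^2) with (t*t*(c*c + sn*sn)) by ring. nra. }
    assert (Hw : is_derive (fun t => t*t / (1 - t*t)) t (2*t / ((1 - t*t) * (1 - t*t))))
      by (auto_derive; [apply Rgt_not_eq; nra | field; nra]).
    pose proof (is_derive_comp_C1 H (fun t => t*c) (fun t => t*sn) t c sn C1H Hin
      ltac:(auto_derive; auto; ring) ltac:(auto_derive; auto; ring)) as HH.
    unfold L. eapply is_derive_val.
    - apply is_derive_mult_R; [exact Hw|].
      apply is_derive_minus_R with (dg := 0); [exact HH | auto_derive; reflexivity].
    - unfold dL, u_of. replace ((t*c)^2 + (t*sn)^2) with (t*t*(c*c + sn*sn)) by ring.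
      rewrite Hcs. field. nra. }
  destruct (MVT_gen L rho r dL) as (xi & Hxi & E);
    rewrite ?Rmin_left, ?Rmax_right in * by lra.
  - intros x Hx. apply HD. lra.
  - intros x Hx. apply (is_derive_continuity_pt _ _ (dL x)), HD. lra.
  - enough (dL xi <= 0) by (fold (L r) (L rho); nra).
    assert (0 < 1 - xi*xi) by nra.
    apply Rmult_le_0_l; [|pose proof (Hu xi Hxi); lra].
    apply Rmult_le_pos; [lra | left; apply Rinv_0_lt_compat; nra].
Qed.

Lemma H_circle_bounded H rho : C1_on in_disk H -> 0 <= rho < 1 ->
  exists B, forall c sn, c*c + sn*sn = 1 -> H (rho*c) (rho*sn) <= B.
Proof.
  intros C1H Hrho. pose proof PI_RGT_0.
  destruct (continuity_ab_maj (fun al => H (rho * cos al) (rho * sin al)) 0 (2*PI))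
    as (al0 & Hal0 & _); [lra| |].
  { intros al _. apply continuity_pt_comp_2d.
    - apply C1_continuous; [exact C1H|]. unfold in_disk.
      pose proof (sin2_cos2 al). unfold Rsqr in *. nra.
    - apply continuity_pt_scal, continuity_cos.
    - apply continuity_pt_scal, continuity_sin. }
  exists (H (rho * cos al0) (rho * sin al0)). intros c sn Hcs.
  destruct (polar_coordinates c sn) as (r & al & Hr0 & Hr2 & Hal & Ec & Es).
  replace r with 1 in Ec, Es by nra.
  rewrite Ec, Es, !Rmult_1_l. apply Hal0. exact Hal.
Qed.

Lemma H_annulus_bound H M rho : C1_on in_disk H -> 0 < rho < 1 ->
  (forall x y, in_disk x y -> rho*rho <= x^2 + y^2 -> u_of H x y <= M) ->
  exists K, 0 <= K /\ forall x y, in_disk x y -> rho*rho <= x^2 + y^2 ->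
    (x^2 + y^2) * (H x y - M) <= K * (1 - (x^2 + y^2)).
Proof.
  intros C1H Hrho Hu.
  destruct (H_circle_bounded H rho C1H) as (B & HB); [lra|].
  assert (Hq : 0 <= rho*rho / (1 - rho*rho))
    by (apply Rmult_le_pos; [nra | left; apply Rinv_0_lt_compat; nra]).
  exists (rho*rho / (1 - rho*rho) * Rmax 0 (B - M)).
  split; [apply Rmult_le_pos; [exact Hq | apply Rmax_l]|].
  intros x y Hxy Hout.
  destruct (polar_coordinates x y) as (r & al & Hr0 & Hr2 & _ & Ex & Ey).
  unfold in_disk in Hxy. rewrite <- Hr2 in *.
  assert (Hcs : cos al * cos al + sin al * sin al = 1)
    by (pose proof (sin2_cos2 al); unfold Rsqr in *; lra).
  pose proof (ray_weighted_le H M (cos al) (sin al) rho r C1H Hcs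
    ltac:(nra) ltac:(nra)) as Hray.
  rewrite <- Ex, <- Ey in Hray.
  assert (Hray_K : r*r / (1 - r*r) * (H x y - M) <= rho*rho / (1 - rho*rho) * Rmax 0 (B - M)).
  { eapply Rle_trans; [apply Hray|].
    - intros t Ht. apply Hu; [unfold in_disk|]; rewrite polar_norm2_pow; nra.
    - apply Rmult_le_compat_l; [exact Hq|].
      pose proof (HB _ _ Hcs). pose proof (Rmax_r 0 (B - M)). lra. }
  replace (r * r * (H x y - M)) with (r*r / (1 - r*r) * (H x y - M) * (1 - r*r)) by (field; nra).
  apply Rmult_le_compat_r; nra.
Qed.

Lemma H_le_near_circle H U M : harmonic_disk H -> C1_closed_disk_ext (u_of H) U ->
  (forall x y, on_circle x y -> U x y <= M) ->
  forall eps, 0 < eps -> exists d, 0 < d /\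
    forall x y, in_disk x y -> 1 - d < x^2 + y^2 -> H x y <= M + eps.
Proof.
  intros hH HU HM eps Heps.
  destruct (u_le_near_circle H U M HU HM (eps/2)) as (d1 & Hd1 & Hu); [lra|].
  set (d2 := Rmin d1 1).
  assert (Hd2 : 0 < d2 <= d1 /\ d2 <= 1)
    by (unfold d2; split; [split; [apply Rmin_pos|apply Rmin_l] | apply Rmin_r]; lra).
  destruct (H_annulus_bound H (M + eps/2) (1 - d2/4) (proj1 (proj1 hH))) as (K & HK & HHK);
    [lra | intros x y Hxy Hout; apply Hu; [exact Hxy | nra]|].
  exists (Rmin (d2/4) (eps / (4 * (K + 1)))).
  split; [apply Rmin_pos; [lra | apply Rdiv_lt_0_compat; lra]|].
  intros x y Hxy Hnear.
  pose proof (Rmin_l (d2/4) (eps / (4 * (K + 1)))).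
  pose proof (Rmin_r (d2/4) (eps / (4 * (K + 1)))).
  assert (HKeps : K * (eps / (4 * (K + 1))) <= eps / 4).
  { apply Rmult_le_reg_r with (4 * (K + 1)); [lra|].
    replace (K * (eps / (4 * (K + 1))) * (4 * (K + 1))) with (K * eps) by (field; lra). nra. }
  pose proof (HHK x y Hxy ltac:(nra)). unfold in_disk in Hxy.
  assert (K * (1 - (x^2 + y^2)) <= eps / 4) by (eapply Rle_trans; [|exact HKeps]; nra).
  nra.
Qed.

Lemma mob_circle_near_circle a b d : a*a + b*b < 1 -> 0 < d ->
  exists s, a*a + b*b < s*s /\ 0 < s < 1 /\ forall v, 1 - d < mob_P a b s v ^ 2 + mob_Q a b s v ^ 2.
Proof.
  intros Hw Hd.
  set (Lb := (1 - sqrt (a*a + b*b)) ^ 2).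
  assert (HLb : 0 < Lb).
  { assert (sqrt (a*a + b*b) < 1) by (rewrite <- sqrt_1; apply sqrt_lt_1; nra).
    unfold Lb. nra. }
  assert (Hk : 0 < kappa a b) by (unfold kappa; lra).
  set (t := Rmax ((1 + (a*a + b*b)) / 2) (1 - d * Lb / (2 * kappa a b))).
  assert (Ht : (1 + (a*a + b*b)) / 2 <= t /\ 1 - d * Lb / (2 * kappa a b) <= t)
    by (split; [apply Rmax_l | apply Rmax_r]).
  assert (Hdk : 0 < d * Lb / (2 * kappa a b)) by (apply Rdiv_lt_0_compat; nra).
  assert (Ht1 : t < 1) by (apply Rmax_lub_lt; lra).
  exists (sqrt t).
  assert (Hs2 : sqrt t * sqrt t = t) by (apply sqrt_sqrt; nra).
  assert (Hs : 0 < sqrt t < 1)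
    by (split; [apply sqrt_lt_R0 | rewrite <- sqrt_1; apply sqrt_lt_1]; nra).
  split; [nra | split; [exact Hs|]]. intros v.
  assert (Hden : Lb <= mob_den a b (sqrt t * cos v) (sqrt t * sin v))
    by (apply mob_den_lower_bound; [|rewrite polar_norm2]; nra).
  unfold mob_P, mob_Q. rewrite mob_norm2, polar_norm2, Hs2 by lra.
  enough (kappa a b * (1 - t) / mob_den a b (sqrt t * cos v) (sqrt t * sin v) < d) by lra.
  apply Rle_lt_trans with (kappa a b * (1 - t) / Lb).
  - apply Rmult_le_compat_l; [nra | apply Rinv_le_contravar; lra].
  - apply Rmult_lt_reg_r with Lb; [lra|]. unfold Rdiv. rewrite Rmult_assoc, Rinv_l by lra.
    assert (kappa a b * (1 - t) <= kappa a b * (d * Lb / (2 * kappa a b)))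
      by (apply Rmult_le_compat_l; lra).
    replace (kappa a b * (d * Lb / (2 * kappa a b))) with (d * Lb / 2) in * by (field; lra).
    nra.
Qed.

Theorem lemma3 (H U : R -> R -> R) (M : R) :
  harmonic_disk H ->
  C1_closed_disk_ext (u_of H) U ->
  (forall x y, on_circle x y -> U x y <= M) ->
  forall x y, in_disk x y -> u_of H x y <= M.
Proof.
  intros hH HU HM a b Hab.
  assert (Hw : a*a + b*b < 1) by (unfold in_disk in Hab; nra).
  apply Rle_plus_epsilon. intros eps Heps.
  destruct (H_le_near_circle H U M hH HU HM eps Heps) as (d & Hd & Hnear).
  destruct (mob_circle_near_circle a b d Hw Hd) as (s & Hws & Hs & Hmob).
  apply (u_of_le_of_pullback_le H a b s); [exact hH | exact Hws | exact Hs |].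
  intros v. apply Hnear; [apply mob_in_disk | apply Hmob]; lra.
Qed.
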